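(* Let $\mathscr T$ be a functor satisfying (T1)–(T4) and $\mathfrak K=(K,\bigsqcup,\odot,{}^*,{\sim},e)$ a $\mathscr T$-based orthomodular dynamic algebra. Then (i) $K$ (with its quantale order $\sqsubseteq$) is an atomic lattice whose atoms are exactly the elements of $\mathscr T(K)$; (ii) the structure $\mathscr P(\mathscr T(\mathfrak K))=(\mathscr P(\mathscr T(K)),\bigcup,\boxdot,{}^\star,\boxtimes,\{e\})$ is a $\mathscr T$-based orthomodular dynamic algebra, and $h_{\mathfrak K}$ is an isomorphism from $\mathfrak K$ onto it.
   Context: Here $h_{\mathfrak K}\colon K\to\mathscr P(\mathscr T(K))$ is $h_{\mathfrak K}(v)=\{w\in\mathscr T(K)\mid w\sqsubseteq v\}$, and on the powerset $\mathscr P(\mathscr T(K))$: $A\boxdot B=h_{\mathfrak K}(\bigsqcup A\odot\bigsqcup B)$, $A^\star=h_{\mathfrak K}((\bigsqcup A)^* )$, $\boxtimes A=h_{\mathfrak K}({\sim}\bigsqcup A)$, joins are unions, unit $\{e\}$. An involutive unital quantale is $(Q,\bigsqcup,\odot,{}^*,e)$: $Q$ a complete join-semilattice (order $\sqsubseteq$), $\odot$ associative and distributing over arbitrary joins in each argument, $e$ a unit, ${}^*$ with $x^{**}=x$, $(x\odot y)^*=y^*\odot x^*$, $(\bigsqcup x_i)^*=\bigsqcup x_i^*$. An involutive generalized dynamic algebra (IDA) is such a quantale with ${\sim}\colon K\to K$ satisfying, for all $x,y$ and families $(x_i)$: ${\sim}(x\odot{\sim}{\sim}y)={\sim}(x\odot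 y)$; ${\sim}(\bigsqcup{\sim}{\sim}x_i)={\sim}(\bigsqcup x_i)$; $({\sim}x)^*={\sim}x$; ${\sim}{\sim}({\sim}{\sim}x\odot y)={\sim}({\sim}x\sqcup{\sim}({\sim}x\sqcup y))$. Test set $\widetilde K=\{{\sim}k\}$; $\bigvee W={\sim}{\sim}\bigsqcup W$; $w^\perp={\sim}w$; $k\preceq l$ iff $\bigvee\{k,l\}=l$; $k\bullet v={\sim}{\sim}(k\odot v)$; $k\equiv l$ iff $k\bullet w=l\bullet w$ for all $w\in\widetilde K$. IDA morphisms preserve joins, $\odot$, ${}^*$, unit, ${\sim}$ (category $\mathbb{IDA}$); isomorphisms are bijective morphisms; semi-Foulis means $(\widetilde K,\preceq,{}^\perp)$ is a complete orthomodular lattice. $\mathbb{IM}$: involutive monoids and homomorphisms. For a complete orthomodular lattice $\mathcal M$: $\pi_m(x)=m\wedge(m^\perp\vee x)$; $\mathbf{Lin}(\mathcal M)$ is the set of maps $f$ admitting $f^*$ with $f(x)\le y^\perp\iff x\le f^*(y)^\perp$, an IDA under pointwise joins, composition, ${}^*$, $\mathrm{id}$, ${\sim}f=\pi_{f(1)^\perp}$; for an involutive submonoid $L\supseteq\{\pi_m\}$, $\mathscr P(L)$ is the IDA of subsets of $L$ with union, setwise composition and involution, unit $\{\mathrm{id}\}$, ${\sim}A=\{\pi_{(\bigvee_{a\in A}a(1))^\perp}\}$. $\mathscr T\colon\mathbb{IDA}\to\mathbb{IM}$ satisfies: (T1) $\widetilde K\subseteq\mathscr T(K)\subseteq K$,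 $\mathscr T(K)$ an involutive submonoid; (T2) for semi-Foulis $\mathfrak K$ with $s=t\iff s\equiv t$ on $\mathscr T(K)$, $k\mapsto k\bullet(-)$ is an isomorphism $\mathscr T(\mathfrak K)\to\mathscr T(\mathbf{Lin}(\widetilde{\mathfrak K}))$; (T3) $f\mapsto\{f\}$ is an isomorphism $\mathscr T(\mathbf{Lin}(\mathcal M))\to\mathscr T(\mathscr P(\mathscr T(\mathbf{Lin}(\mathcal M))))$; (T4) $\mathscr T(f)$ is the restriction of $f$. A $\mathscr T$-based orthomodular dynamic algebra is an IDA with: (TODA1) $(\widetilde K,\preceq,{}^\perp)$ a complete orthomodular lattice; (TODA2) every $A$ with $\mathscr T(K)\subseteq A\subseteq K$ closed under $\odot$, ${}^*$, arbitrary joins equals $K$; (TODA3) for $S,T\subseteq\mathscr T(K)$, $\bigsqcup S=\bigsqcup T$ iff $S=T$; (TODA4) for $s,t\in\mathscr T(K)$, $s=t$ iff $s\equiv t$. *)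

From Stdlib Require Import ClassicalEpsilon.
Set Implicit Arguments.
Unset Strict Implicit.

Definition image {A B : Type} (f : A -> B) (S : A -> Prop) : B -> Prop :=
  fun y => exists x, S x /\ y = f x.
Definition pairset {A : Type} (a b : A) : A -> Prop := fun x => x = a \/ x = b.
Definition is_lub {A : Type} (le : A -> A -> Prop) (S : A -> Prop) (x : A) : Prop :=
  (forall y, S y -> le y x) /\ (forall z, (forall y, S y -> le y z) -> le x z).
Definition is_glb {A : Type} (le : A -> A -> Prop) (S : A -> Prop) (x : A) : Prop :=
  (forall y, S y -> le x y) /\ (forall z, (forall y, S y -> le z y) -> le z x).
Definition partial_order {A : Type} (le : A -> A -> Prop) : Prop :=
  (forall x, le x x) /\ (forall x y z, le x y -> le y z -> le x z) /\
  (forall x y, le x y -> le y x -> x = y).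
Definition bijective {A B : Type} (f : A -> B) : Prop :=
  (forall a b, f a = f b -> a = b) /\ (forall y, exists x, f x = y).

Record ida := IDA {
  car :> Type;
  le : car -> car -> Prop;
  sup : (car -> Prop) -> car;
  mul : car -> car -> car;
  star : car -> car;
  neg : car -> car;
  one : car }.
Arguments le {i} _ _.
Arguments sup {i} _.
Arguments mul {i} _ _.
Arguments star {i} _.
Arguments neg {i} _.
Arguments one i : clear implicits.

Definition is_IDA (D : ida) : Prop :=
  partial_order (@le D) /\
  (forall S : D -> Prop, is_lub le S (sup S)) /\
  (forall x y z : D, mul x (mul y z) = mul (mul x y) z) /\
  (forall x : D, mul (one D) x = x /\ mul x (one D) = x) /\
  (forall (x : D) S, mul x (sup S) = sup (image (mul x) S)) /\
  (forall (x : D) S, mul (sup S) x = sup (image (fun y => mul y x) S)) /\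
  (forall x : D, star (star x) = x) /\
  (forall x y : D, star (mul x y) = mul (star y) (star x)) /\
  (forall S : D -> Prop, star (sup S) = sup (image star S)) /\
  (forall x y : D, neg (mul x (neg (neg y))) = neg (mul x y)) /\
  (forall S : D -> Prop, neg (sup (image (fun x => neg (neg x)) S)) = neg (sup S)) /\
  (forall x : D, star (neg x) = neg x) /\
  (forall x y : D, neg (neg (mul (neg (neg x)) y)) =
                   neg (sup (pairset (neg x) (neg (sup (pairset (neg x) y)))))).

Definition is_test {D : ida} (x : D) : Prop := exists k, x = neg k.
Definition vee {D : ida} (W : D -> Prop) : D := neg (neg (sup W)).
Definition tle {D : ida} (k l : D) : Prop := vee (pairset k l) = l.
Definition bullet {D : ida} (k v : D) : D := neg (neg (mul k v)).
Definition equiv {D : ida} (k l : D) : Prop :=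
  forall w : D, is_test w -> bullet k w = bullet l w.

Definition ida_morphism {D1 D2 : ida} (f : D1 -> D2) : Prop :=
  (forall S : D1 -> Prop, f (sup S) = sup (image f S)) /\
  (forall x y, f (mul x y) = mul (f x) (f y)) /\
  (forall x, f (star x) = star (f x)) /\
  f (one D1) = one D2 /\
  (forall x, f (neg x) = neg (f x)).
Definition ida_iso {D1 D2 : ida} (f : D1 -> D2) : Prop :=
  ida_morphism f /\ bijective f.

Definition im_iso {D1 D2 : ida} {P1 : D1 -> Prop} {P2 : D2 -> Prop}
  (phi : {x : D1 | P1 x} -> {y : D2 | P2 y}) : Prop :=
  bijective phi /\
  (forall s t st : {x : D1 | P1 x}, proj1_sig st = mul (proj1_sig s) (proj1_sig t) ->
     proj1_sig (phi st) = mul (proj1_sig (phi s)) (proj1_sig (phi t))) /\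
  (forall s s' : {x : D1 | P1 x}, proj1_sig s' = star (proj1_sig s) ->
     proj1_sig (phi s') = star (proj1_sig (phi s))) /\
  (forall u : {x : D1 | P1 x}, proj1_sig u = one D1 -> proj1_sig (phi u) = one D2).

Record oml := OML {
  ocar :> Type;
  ole : ocar -> ocar -> Prop;
  ocompl : ocar -> ocar }.
Arguments ole {o} _ _.
Arguments ocompl {o} _.

(* chosen lubs (d is any element, used only to witness inhabitation) *)
Definition osup {M : oml} (S : M -> Prop) (d : M) : M :=
  epsilon (inhabits d) (is_lub ole S).
Definition ojoin {M : oml} (a b : M) : M := osup (pairset a b) a.
Definition omeet {M : oml} (a b : M) : M := ocompl (ojoin (ocompl a) (ocompl b)).
Definition otop {M : oml} (d : M) : M := osup (fun _ => True) d.

Definition is_cOML (M : oml) : Prop :=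
  partial_order (@ole M) /\
  (forall S : M -> Prop, exists x, is_lub ole S x) /\
  (forall x : M, ocompl (ocompl x) = x) /\
  (forall x y : M, ole x y -> ole (ocompl y) (ocompl x)) /\
  (forall x z : M, ole z (ojoin x (ocompl x))) /\
  (forall x y : M, ole x y -> y = ojoin x (omeet y (ocompl x))).

Definition sasaki {M : oml} (m x : M) : M := omeet m (ojoin (ocompl m) x).

Definition adjoint_of {M : oml} (f g : M -> M) : Prop :=
  forall x y, ole (f x) (ocompl y) <-> ole x (ocompl (g y)).
Definition has_adjoint {M : oml} (f : M -> M) : Prop := exists g, adjoint_of f g.

Lemma id_has_adjoint (M : oml) : has_adjoint (fun x : M => x).
Proof. exists (fun x => x); intros x y; tauto. Qed.

Definition Lincar (M : oml) : Type := {f : M -> M | has_adjoint f}.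

(* packaging a map as an element of Lin(M); the fallback (identity) is
   never used on maps that are known to be adjointable *)
Definition mkLin {M : oml} (g : M -> M) : Lincar M :=
  match excluded_middle_informative (has_adjoint g) with
  | left H => exist _ g H
  | right _ => exist _ (fun x => x) (id_has_adjoint M)
  end.

Definition Lin_sup {M : oml} (F : Lincar M -> Prop) : Lincar M :=
  mkLin (fun x => osup (fun z => exists f, F f /\ z = proj1_sig f x) x).
Definition Lin_mul {M : oml} (f g : Lincar M) : Lincar M :=
  mkLin (fun x => proj1_sig f (proj1_sig g x)).
Definition Lin_star {M : oml} (f : Lincar M) : Lincar M :=
  mkLin (epsilon (inhabits (fun x : M => x)) (adjoint_of (proj1_sig f))).
Definition Lin_neg {M : oml} (f : Lincar M) : Lincar M :=
  mkLin (fun x => sasaki (ocompl (proj1_sig f (otop x))) x).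

Definition Lin (M : oml) : ida :=
  {| car := Lincar M;
     le := fun f g => forall x, ole (proj1_sig f x) (proj1_sig g x);
     sup := Lin_sup;
     mul := Lin_mul;
     star := Lin_star;
     neg := Lin_neg;
     one := mkLin (fun x => x) |}.

Definition PLin (M : oml) (L : Lin M -> Prop) : ida :=
  {| car := {f : Lin M | L f} -> Prop;
     le := fun A B => forall a, A a -> B a;
     sup := fun F a => exists A, F A /\ A a;
     mul := fun A B c => exists a b, A a /\ B b /\
                          proj1_sig c = mul (proj1_sig a) (proj1_sig b);
     star := fun A c => exists a, A a /\ proj1_sig c = star (proj1_sig a);
     neg := fun A c => proj1_sig c =
        mkLin (fun x => sasaki (ocompl
           (osup (fun z => exists a, A a /\ z = proj1_sig (proj1_sig a) (otop x)) x)) x);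
     one := fun c => proj1_sig c = one (Lin M) |}.

Arguments PLin : clear implicits.

Definition tests_neg {D : ida} (a : {x : D | is_test x}) : {x : D | is_test x} :=
  exist _ (neg (proj1_sig a)) (ex_intro _ (proj1_sig a) eq_refl).
Definition tests_oml (D : ida) : oml :=
  {| ocar := {x : D | is_test x};
     ole := fun a b => tle (proj1_sig a) (proj1_sig b);
     ocompl := tests_neg |}.
Definition semi_Foulis (D : ida) : Prop := is_cOML (tests_oml D).

Definition bullet_test {D : ida} (k : D) (w : tests_oml D) : tests_oml D :=
  exist _ (bullet k (proj1_sig w)) (ex_intro _ (neg (mul k (proj1_sig w))) eq_refl).

(* The functor T : IDA -> IM, described by its object part             *)
(* T D : subset of D (by (T1) T(K) is a subset of K, and by (T4) T(f)  *)
(* is the restriction of f).  Its values on non-IDA data are irrelevant.*)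
Definition Tfunctor := forall D : ida, D -> Prop.

Definition T_T1 (T : Tfunctor) : Prop :=
  forall D : ida, is_IDA D ->
    (forall x : D, is_test x -> T D x) /\ T D (one D) /\
    (forall x y : D, T D x -> T D y -> T D (mul x y)) /\
    (forall x : D, T D x -> T D (star x)).

(* functoriality + (T4): the restriction of any morphism maps T(D1) into T(D2) *)
Definition T_T4 (T : Tfunctor) : Prop :=
  forall (D1 D2 : ida) (f : D1 -> D2), is_IDA D1 -> is_IDA D2 -> ida_morphism f ->
    forall x, T D1 x -> T D2 (f x).

Definition T_T2 (T : Tfunctor) : Prop :=
  forall D : ida, is_IDA D -> semi_Foulis D ->
    (forall s t : D, T D s -> T D t -> (s = t <-> equiv s t)) ->
    exists phi : {k : D | T D k} -> {f : Lin (tests_oml D) | T (Lin (tests_oml D)) f},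
      (forall k w, proj1_sig (proj1_sig (phi k)) w = bullet_test (proj1_sig k) w) /\
      im_iso phi.

Definition T_T3 (T : Tfunctor) : Prop :=
  forall M : oml, is_cOML M ->
    exists phi : {f : Lin M | T (Lin M) f} ->
                 {A : PLin M (T (Lin M)) | T (PLin M (T (Lin M))) A},
      (forall f g, proj1_sig (phi f) g <-> g = f) /\ im_iso phi.

Definition is_TODA (T : Tfunctor) (D : ida) : Prop :=
  is_IDA D /\
  is_cOML (tests_oml D) /\
  (forall A : D -> Prop, (forall x, T D x -> A x) ->
                (forall x y, A x -> A y -> A (mul x y)) ->
                (forall x, A x -> A (star x)) ->
                (forall S, (forall x, S x -> A x) -> A (sup S)) ->
                forall x, A x) /\
  (forall S S' : D -> Prop, (forall x, S x -> T D x) -> (forall x, S' x -> T D x) ->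
                (sup S = sup S' <-> (forall x, S x <-> S' x))) /\
  (forall s t : D, T D s -> T D t -> (s = t <-> equiv s t)).

Definition hK (T : Tfunctor) (K : ida) (v : K) : {x : K | T K x} -> Prop :=
  fun w => le (proj1_sig w) v.
Definition ssup (T : Tfunctor) (K : ida) (A : {x : K | T K x} -> Prop) : K :=
  sup (fun x => exists a, A a /\ x = proj1_sig a).
Arguments hK : clear implicits.
Arguments ssup : clear implicits.

Definition PT (T : Tfunctor) (K : ida) : ida :=
  {| car := {x : K | T K x} -> Prop;
     le := fun A B => forall a, A a -> B a;
     sup := fun F a => exists A, F A /\ A a;
     mul := fun A B => hK T K (mul (ssup T K A) (ssup T K B));
     star := fun A => hK T K (star (ssup T K A));
     neg := fun A => hK T K (neg (ssup T K A));
     one := fun c => proj1_sig c = one K |}.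
Arguments PT : clear implicits.


Definition bot (D : ida) : D := sup (fun _ => False).
Definition is_atom {D : ida} (a : D) : Prop :=
  a <> bot D /\ forall y, le y a -> y = bot D \/ y = a.
Definition is_lattice (D : ida) : Prop :=
  partial_order (@le D) /\
  (forall x y : D, exists z, is_lub le (pairset x y) z) /\
  (forall x y : D, exists z, is_glb le (pairset x y) z).
Definition is_atomic (D : ida) : Prop :=
  forall x : D, x <> bot D -> exists a, is_atom a /\ le a x.

(* Every element of K is the join of the elements of T(K) below it: by (TODA2), since
   the joins of subsets of T(K) contain T(K) and are closed under products (which
   distribute over joins), involution and joins.  Conversely, an element t of T(K)
   below the join of some S included in T(K) lies in S, because by (TODA3) adding t
   to S does not change the join.  Hence h_K is an order isomorphism onto P(T(K))
   with inverse A |-> join A, it preserves the operations (those of P(T(K)) are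
   defined through join and h_K), and the elements of T(K) are exactly the atoms.
   Transporting the structure of K along h_K, with (T4) applied to h_K and to its
   inverse, makes P(T(K)) a T-based orthomodular dynamic algebra. *)

From Stdlib Require Import ClassicalEpsilon FunctionalExtensionality PropExtensionality
  ProofIrrelevance Classical.

Lemma pred_ext {A : Type} (P Q : A -> Prop) : (forall x, P x <-> Q x) -> P = Q.
Proof.
  intro H; apply functional_extensionality; intro x; apply propositional_extensionality; auto.
Qed.

Lemma pred_eq_iff {A : Type} (P Q : A -> Prop) : (forall x, P x <-> Q x) <-> P = Q.
Proof. split; [apply pred_ext | intros -> x; tauto]. Qed.

Lemma sig_eq {A : Type} {P : A -> Prop} (a b : {x : A | P x}) :
  proj1_sig a = proj1_sig b -> a = b.
Proof. apply eq_sig_hprop; intros; apply proof_irrelevance. Qed.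

Lemma image_pair {A B : Type} (f : A -> B) (a b : A) :
  image f (pairset a b) = pairset (f a) (f b).
Proof.
  apply pred_ext; intro y; unfold image, pairset; split.
  - intros [x [[-> | ->] ->]]; auto.
  - intros [-> | ->]; eauto.
Qed.

Lemma image_comm {A B : Type} (f : A -> B) (h : A -> A) (h' : B -> B) (S : A -> Prop) :
  (forall x, f (h x) = h' (f x)) -> image f (image h S) = image h' (image f S).
Proof.
  intro H; apply pred_ext; intro y; split; intros [x [[z [Hz ->]] ->]].
  - exists (f z); split; [exists z | ]; auto.
  - exists (h z); split; [exists z | ]; auto.
Qed.

Lemma lub_unique {A : Type} {le : A -> A -> Prop} (Hpo : partial_order le)
  (S : A -> Prop) (x y : A) : is_lub le S x -> is_lub le S y -> x = y.
Proof. destruct Hpo as (_ & _ & Hanti); intros [Hx Hx'] [Hy Hy']; apply Hanti; auto. Qed.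

Section Bijection.

Context {A B : Type} (f : A -> B) (g : B -> A).
Hypotheses (gf : forall x, g (f x) = x) (fg : forall u, f (g u) = u).

Lemma cancel_inj_iff (x y : A) : f x = f y <-> x = y.
Proof. split; [intro E; rewrite <- (gf x), E, gf | intros ->]; auto. Qed.

Lemma image_cancel (S : B -> Prop) : image f (image g S) = S.
Proof.
  apply pred_ext; intro u; split.
  - intros [x [[v [Hv ->]] ->]]; rewrite fg; auto.
  - intro Hu; exists (g u); split; [exists u |]; auto.
Qed.

Context {leA : A -> A -> Prop} {leB : B -> B -> Prop}.
Hypothesis Hle : forall x y, leA x y <-> leB (f x) (f y).

Lemma partial_order_transport : partial_order leA -> partial_order leB.
Proof.
  intros (Hrefl & Htrans & Hanti); split; [| split].
  - intro u; rewrite <- (fg u); apply Hle, Hrefl.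
  - intros u v w; rewrite <- (fg u), <- (fg v), <- (fg w), <- !Hle; eauto.
  - intros u v; rewrite <- (fg u), <- (fg v), <- !Hle; intros; f_equal; auto.
Qed.

Lemma is_lub_image (S : A -> Prop) (x : A) :
  is_lub leA S x -> is_lub leB (image f S) (f x).
Proof.
  intros [Hub Hleast]; split.
  - intros y [z [Hz ->]]; apply Hle; auto.
  - intros u Hu; rewrite <- (fg u); apply Hle, Hleast; intros y Hy.
    apply Hle; rewrite fg; apply Hu; exists y; auto.
Qed.

Lemma has_lubs_transport :
  (forall S : A -> Prop, exists x, is_lub leA S x) ->
  forall S : B -> Prop, exists u, is_lub leB S u.
Proof.
  intros Hlub S; destruct (Hlub (image g S)) as [x Hx]; exists (f x).
  rewrite <- (image_cancel S); apply is_lub_image; auto.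
Qed.

End Bijection.

Section IDA_order.

Context {D : ida} (HI : is_IDA D).

Lemma le_refl (x : D) : le x x.
Proof. destruct HI as [[H _] _]; auto. Qed.

Lemma le_trans (x y z : D) : le x y -> le y z -> le x z.
Proof. destruct HI as [[_ [H _]] _]; eauto. Qed.

Lemma le_anti (x y : D) : le x y -> le y x -> x = y.
Proof. destruct HI as [[_ [_ H]] _]; auto. Qed.

Lemma sup_ub (S : D -> Prop) (y : D) : S y -> le y (sup S).
Proof. destruct HI as [_ [H _]]; apply (H S). Qed.

Lemma sup_least (S : D -> Prop) (z : D) : (forall y, S y -> le y z) -> le (sup S) z.
Proof. destruct HI as [_ [H _]]; apply (H S). Qed.

Lemma sup_single (x : D) : sup (fun y => y = x) = x.
Proof.
  apply le_anti; [apply sup_least; intros y ->; apply le_refl | apply sup_ub; auto].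
Qed.

Lemma sup_pair_of_le (a b : D) : le a b -> sup (pairset a b) = b.
Proof.
  intro H; apply le_anti.
  - apply sup_least; intros y [-> | ->]; auto using le_refl.
  - apply sup_ub; right; auto.
Qed.

Lemma mul_mono_l (a a' b : D) : le a a' -> le (mul a b) (mul a' b).
Proof.
  intro H; rewrite <- (sup_pair_of_le _ _ H).
  destruct HI as (_ & _ & _ & _ & _ & Hdr & _); rewrite Hdr.
  apply sup_ub; exists a; split; [left |]; auto.
Qed.

Lemma mul_mono_r (a a' b : D) : le a a' -> le (mul b a) (mul b a').
Proof.
  intro H; rewrite <- (sup_pair_of_le _ _ H).
  destruct HI as (_ & _ & _ & _ & Hdl & _); rewrite Hdl.
  apply sup_ub; exists a; split; [left |]; auto.
Qed.

Lemma mul_sup_sup (S S' : D -> Prop) :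
  mul (sup S) (sup S') = sup (fun z => exists a b, S a /\ S' b /\ z = mul a b).
Proof.
  destruct HI as (_ & _ & _ & _ & Hdl & Hdr & _).
  apply le_anti.
  - rewrite Hdr; apply sup_least; intros y [a [Ha ->]].
    rewrite Hdl; apply sup_least; intros z [b [Hb ->]].
    apply sup_ub; exists a, b; auto.
  - apply sup_least; intros z (a & b & Ha & Hb & ->).
    apply le_trans with (mul (sup S) b).
    + apply mul_mono_l, sup_ub; auto.
    + apply mul_mono_r, sup_ub; auto.
Qed.

Lemma sup_of_sups (P : (D -> Prop) -> Prop) (S : D -> Prop) :
  (forall x, S x -> exists A, P A /\ x = sup A) ->
  sup S = sup (fun z => exists A, P A /\ S (sup A) /\ A z).
Proof.
  intro HS; apply le_anti.
  - apply sup_least; intros x Hx; destruct (HS x Hx) as [A [HA ->]].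
    apply sup_least; intros z Hz; apply sup_ub; exists A; auto.
  - apply sup_least; intros z (A & HA & HsA & Hz).
    apply le_trans with (sup A); apply sup_ub; auto.
Qed.

Lemma ida_is_lattice : is_lattice D.
Proof.
  split; [apply HI | split].
  - intros x y; exists (sup (pairset x y)); apply HI.
  - intros x y; exists (sup (fun z => le z x /\ le z y)); split.
    + intros v [-> | ->]; apply sup_least; intros z [Hx Hy]; auto.
    + intros z Hz; apply sup_ub; split; apply Hz; [left | right]; auto.
Qed.

End IDA_order.

Lemma ojoin_lub {M : oml} :
  (forall S : M -> Prop, exists x, is_lub ole S x) ->
  forall a b : M, is_lub ole (pairset a b) (ojoin a b).
Proof. intros Hlub a b; unfold ojoin, osup; apply epsilon_spec, Hlub. Qed.

Lemma is_cOML_transport {M1 M2 : oml} (g : M1 -> M2) (h : M2 -> M1)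
  (hg : forall x, h (g x) = x) (gh : forall u, g (h u) = u)
  (Hle : forall x y, ole x y <-> ole (g x) (g y))
  (Hc : forall x, g (ocompl x) = ocompl (g x)) :
  is_cOML M1 -> is_cOML M2.
Proof.
  intros (Hpo & Hlub & Hcc & Hanti & Hexcl & Horth).
  assert (Hpo2 := partial_order_transport g h gh Hle Hpo).
  assert (Hlub2 := has_lubs_transport g h gh Hle Hlub).
  assert (Hjoin : forall a b, g (ojoin a b) = ojoin (g a) (g b)).
  { intros a b; apply (lub_unique Hpo2 (pairset (g a) (g b))); [| apply ojoin_lub; auto].
    rewrite <- image_pair; apply (is_lub_image g h gh Hle), ojoin_lub; auto. }
  assert (Hmeet : forall a b, g (omeet a b) = omeet (g a) (g b)).
  { intros a b; unfold omeet; rewrite Hc, Hjoin, !Hc; auto. }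
  split; [| split; [| split; [| split; [| split]]]]; auto.
  - intro u; rewrite <- (gh u), <- !Hc, Hcc; auto.
  - intros u v; rewrite <- (gh u), <- (gh v), <- !Hc, <- !Hle; apply Hanti.
  - intros u v; rewrite <- (gh u), <- (gh v), <- Hc, <- Hjoin, <- Hle; apply Hexcl.
  - intros u v; rewrite <- (gh u), <- (gh v), <- Hle, <- Hc, <- Hmeet, <- Hjoin.
    intro H; f_equal; auto.
Qed.

Section Morphism.

Context {D1 D2 : ida} (f : D1 -> D2) (Hm : ida_morphism f).

Lemma morph_sup (S : D1 -> Prop) : f (sup S) = sup (image f S).
Proof. apply Hm. Qed.

Lemma morph_mul (x y : D1) : f (mul x y) = mul (f x) (f y).
Proof. apply Hm. Qed.

Lemma morph_star (x : D1) : f (star x) = star (f x).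
Proof. apply Hm. Qed.

Lemma morph_neg (x : D1) : f (neg x) = neg (f x).
Proof. apply Hm. Qed.

Lemma is_test_morph (x : D1) : is_test x -> is_test (f x).
Proof. intros [k ->]; exists (f k); apply morph_neg. Qed.

Definition test_map (a : tests_oml D1) : tests_oml D2 :=
  exist _ (f (proj1_sig a)) (is_test_morph _ (proj2_sig a)).

Lemma vee_morph (W : D1 -> Prop) : f (vee W) = vee (image f W).
Proof. unfold vee; rewrite !morph_neg, morph_sup; auto. Qed.

Lemma bullet_morph (k v : D1) : f (bullet k v) = bullet (f k) (f v).
Proof. unfold bullet; rewrite !morph_neg, morph_mul; auto. Qed.

End Morphism.

Definition T_generates (T : Tfunctor) (D : ida) : Prop :=
  forall A : D -> Prop, (forall x, T D x -> A x) ->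
    (forall x y, A x -> A y -> A (mul x y)) ->
    (forall x, A x -> A (star x)) ->
    (forall S, (forall x, S x -> A x) -> A (sup S)) ->
    forall x, A x.

Definition T_sup_inj (T : Tfunctor) (D : ida) : Prop :=
  forall S S' : D -> Prop, (forall x, S x -> T D x) -> (forall x, S' x -> T D x) ->
    (sup S = sup S' <-> (forall x, S x <-> S' x)).

Definition T_equiv_eq (T : Tfunctor) (D : ida) : Prop :=
  forall s t : D, T D s -> T D t -> (s = t <-> equiv s t).

Section Isomorphism.

Context {D1 D2 : ida} (f : D1 -> D2) (g : D2 -> D1).
Hypotheses (gf : forall x, g (f x) = x) (fg : forall u, f (g u) = u).
Hypothesis Hm : ida_morphism f.
Hypothesis Hle : forall x y, le x y <-> le (f x) (f y).

Lemma ida_morphism_inverse : ida_morphism g.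
Proof.
  destruct Hm as (Hsup & Hmul & Hstar & Hone & Hneg).
  split; [| split; [| split; [| split]]].
  - intro S; rewrite <- (gf (sup (image g S))), Hsup, image_cancel; auto.
  - intros u v; rewrite <- (gf (mul (g u) (g v))), Hmul, !fg; auto.
  - intro u; rewrite <- (gf (star (g u))), Hstar, fg; auto.
  - rewrite <- Hone, gf; auto.
  - intro u; rewrite <- (gf (neg (g u))), Hneg, fg; auto.
Qed.

Lemma is_IDA_transport : is_IDA D1 -> is_IDA D2.
Proof.
  destruct Hm as (Hsup & Hmul & Hstar & Hone & Hneg).
  intros (Hpo & Hlub & Hass & Hunit & Hdl & Hdr & Hss & Hsm & Hssup & Hn1 & Hn2 & Hn3 & Hn4).
  assert (Hnn : forall x, f (neg (neg x)) = neg (neg (f x))) by (intro; rewrite !Hneg; auto).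
  split; [exact (partial_order_transport f g fg Hle Hpo) |].
  split.
  { intro S; rewrite <- (image_cancel f g fg S), <- Hsup.
    apply (is_lub_image f g fg Hle), Hlub. }
  (* Write every element as [f a] and every subset as [image f A]; each remaining
     axiom of [D2] then becomes the image under [f] of the same axiom of [D1]. *)
  repeat match goal with |- _ /\ _ => split end;
    repeat match goal with
    | |- forall S : car D2 -> Prop, _ =>
        let S := fresh "S" in let A := fresh "A" in
        intro S; rewrite <- (image_cancel f g fg S); generalize (image g S); clear S; intro A
    | |- forall x : car D2, _ =>
        let x := fresh "x" in let a := fresh "a" in
        intro x; rewrite <- (fg x); generalize (g x); clear x; intro a
    end.
  all: try rewrite <- (image_comm f _ _ _ (Hmul a)).
  all: try rewrite <- (image_comm f _ _ _ (fun x => Hmul x a)).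
  all: try rewrite <- (image_comm f _ _ _ Hstar).
  all: try rewrite <- (image_comm f _ _ _ Hnn).
  all: rewrite <- ?Hone;
    repeat progress rewrite <- ?Hmul, <- ?Hstar, <- ?Hneg, <- ?(image_pair f), <- ?Hsup.
  all: repeat match goal with |- _ /\ _ => split end; f_equal; auto; now destruct (Hunit a).
Qed.

Lemma tests_cOML_transport : is_cOML (tests_oml D1) -> is_cOML (tests_oml D2).
Proof.
  assert (Hgm := ida_morphism_inverse).
  apply (is_cOML_transport (test_map f Hm) (test_map g Hgm)).
  - intro; apply sig_eq; apply gf.
  - intro; apply sig_eq; apply fg.
  - intros [a pa] [b pb]; simpl; unfold tle.
    rewrite <- (cancel_inj_iff f g gf), vee_morph, image_pair; auto; tauto.
  - intro; apply sig_eq, (morph_neg f Hm).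
Qed.

Lemma equiv_morph (s t : D1) : equiv s t <-> equiv (f s) (f t).
Proof.
  split; intros H w Hw.
  - destruct Hw as [k ->]; rewrite <- (fg k), <- (morph_neg f Hm).
    rewrite <- !(bullet_morph f Hm); f_equal; apply H; exists (g k); auto.
  - apply (cancel_inj_iff f g gf); rewrite !(bullet_morph f Hm).
    apply H, (is_test_morph f Hm), Hw.
Qed.

Context (T : Tfunctor) (HT4 : T_T4 T) (HI : is_IDA D1).

Lemma T_transport (x : D1) : T D1 x -> T D2 (f x).
Proof. apply HT4; auto using is_IDA_transport. Qed.

Lemma T_transport_inverse (u : D2) : T D2 u -> T D1 (g u).
Proof. apply HT4; auto using is_IDA_transport, ida_morphism_inverse. Qed.

Lemma T_generates_transport : T_generates T D1 -> T_generates T D2.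
Proof.
  intros Hgen A HA Amul Astar Asup u; rewrite <- (fg u).
  apply (Hgen (fun x => A (f x))).
  - auto using T_transport.
  - intros x y; rewrite (morph_mul f Hm); auto.
  - intro x; rewrite (morph_star f Hm); auto.
  - intros S HS; rewrite (morph_sup f Hm); apply Asup; intros y [x [Hx ->]]; auto.
Qed.

Lemma T_sup_inj_transport : T_sup_inj T D1 -> T_sup_inj T D2.
Proof.
  intros Hsupinj S S' HS HS'; red in Hsupinj.
  rewrite pred_eq_iff, <- (cancel_inj_iff g f fg), !(morph_sup g ida_morphism_inverse).
  rewrite <- pred_eq_iff, Hsupinj by (intros y [x [Hx ->]]; auto using T_transport_inverse).
  rewrite !pred_eq_iff; split; [| intros ->; auto].
  intro E; rewrite <- (image_cancel f g fg S), E, image_cancel; auto.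
Qed.

Lemma T_equiv_eq_transport : T_equiv_eq T D1 -> T_equiv_eq T D2.
Proof.
  intros Hequiv s t Ts Tt; red in Hequiv.
  rewrite <- (cancel_inj_iff g f fg), Hequiv by auto using T_transport_inverse.
  rewrite equiv_morph, !fg; tauto.
Qed.

Lemma is_TODA_transport : is_TODA T D1 -> is_TODA T D2.
Proof.
  intros (_ & Htests & Hgen & Hsupinj & Hequiv); split; [| split; [| split; [| split]]].
  - exact (is_IDA_transport HI).
  - exact (tests_cOML_transport Htests).
  - exact (T_generates_transport Hgen).
  - exact (T_sup_inj_transport Hsupinj).
  - exact (T_equiv_eq_transport Hequiv).
Qed.

End Isomorphism.

Section Representation.

Context (T : Tfunctor) (HT1 : T_T1 T) (K : ida) (HK : is_TODA T K).

Let HI : is_IDA K := proj1 HK.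
Let Hgen : T_generates T K := proj1 (proj2 (proj2 HK)).
Let Hsupinj : T_sup_inj T K := proj1 (proj2 (proj2 (proj2 HK))).

Lemma eq_sup_T (x : K) : exists S, (forall y, S y -> T K y) /\ x = sup S.
Proof.
  destruct (HT1 K HI) as (_ & _ & Tmul & Tstar).
  revert x; apply Hgen.
  - intros x Tx; exists (fun y => y = x); split.
    + intros y ->; auto.
    + symmetry; apply (sup_single HI).
  - intros x y [S [HS ->]] [S' [HS' ->]].
    exists (fun z => exists a b, S a /\ S' b /\ z = mul a b); split.
    + intros z (a & b & Ha & Hb & ->); auto.
    + apply (mul_sup_sup HI).
  - intros x [S [HS ->]]; exists (image star S); split.
    + intros y [z [Hz ->]]; auto.
    + destruct HI as (_ & _ & _ & _ & _ & _ & _ & _ & Hssup & _); apply Hssup.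
  - intros S HS; rewrite (sup_of_sups HI _ S HS).
    eexists; split; [| reflexivity].
    intros z (A & HA & _ & Hz); auto.
Qed.

Lemma mem_of_T_le_sup (w : K) (U : K -> Prop) :
  T K w -> (forall y, U y -> T K y) -> le w (sup U) -> U w.
Proof.
  intros Tw HU Hw.
  assert (E : sup (fun z => U z \/ z = w) = sup U).
  { apply (le_anti HI).
    - apply (sup_least HI); intros y [Hy | ->]; [apply (sup_ub HI) |]; auto.
    - apply (sup_least HI); intros y Hy; apply (sup_ub HI); auto. }
  assert (TUw : forall y, U y \/ y = w -> T K y) by (intros y [Hy | ->]; auto).
  rewrite (Hsupinj _ _ TUw HU) in E; apply E; auto.
Qed.

Lemma hK_ssup (x : K) : ssup T K (hK T K x) = x.
Proof.
  destruct (eq_sup_T x) as [S [HS Ex]]; apply (le_anti HI).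
  - apply (sup_least HI); intros y [a [Ha ->]]; exact Ha.
  - rewrite Ex at 1; apply (sup_least HI); intros y Hy; apply (sup_ub HI).
    exists (exist _ y (HS y Hy)); split; [| reflexivity].
    unfold hK; simpl; rewrite Ex; apply (sup_ub HI); auto.
Qed.

Lemma ssup_hK (A : PT T K) : hK T K (ssup T K A) = A.
Proof.
  apply pred_ext; intro w; unfold hK, ssup; split.
  - intro Hw; apply mem_of_T_le_sup in Hw.
    + destruct Hw as [a [Ha E]]; rewrite (sig_eq w a E); auto.
    + exact (proj2_sig w).
    + intros y [a [_ ->]]; exact (proj2_sig a).
  - intro Hw; apply (sup_ub HI); eauto.
Qed.

Lemma hK_le (x y : K) : le x y <-> le (i := PT T K) (hK T K x) (hK T K y).
Proof.
  simpl; unfold hK; split.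
  - intros H a Ha; apply (le_trans HI) with x; auto.
  - intro H; rewrite <- (hK_ssup x); apply (sup_least HI).
    intros z [a [Ha ->]]; auto.
Qed.

Lemma eq_bot_of_hK_empty (x : K) : (forall a, ~ hK T K x a) -> x = bot K.
Proof.
  intro H; rewrite <- (hK_ssup x); unfold ssup, bot; f_equal.
  apply pred_ext; intro z; split; [intros [a [Ha _]]; exact (H a Ha) | contradiction].
Qed.

Lemma T_neq_bot (x : K) : T K x -> x <> bot K.
Proof.
  intros Tx E; apply (mem_of_T_le_sup x (fun _ => False)); auto; [contradiction |].
  change (le x (bot K)); rewrite <- E; apply (le_refl HI).
Qed.

Lemma T_atom (x : K) : T K x -> is_atom x.
Proof.
  intro Tx; split; [apply T_neq_bot; auto |].
  intros y Hyx; destruct (classic (le x y)) as [Hxy | Hxy].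
  - right; apply (le_anti HI); auto.
  - left; apply eq_bot_of_hK_empty; intros a Ha; apply Hxy.
    assert (E : proj1_sig a = x).
    { apply (mem_of_T_le_sup _ (fun z => z = x)); [exact (proj2_sig a) | intros ? ->; auto |].
      rewrite (sup_single HI); apply (le_trans HI) with y; auto. }
    rewrite <- E; exact Ha.
Qed.

Lemma exists_T_le (x : K) : x <> bot K -> exists a, T K a /\ le a x.
Proof.
  intro Hx; apply NNPP; intro Hn; apply Hx, eq_bot_of_hK_empty.
  intros a Ha; apply Hn; exists (proj1_sig a); split; [exact (proj2_sig a) | exact Ha].
Qed.

Lemma atom_T (x : K) : is_atom x -> T K x.
Proof.
  intros [Hx Hat]; destruct (exists_T_le x Hx) as [a [Ta Hax]].
  destruct (Hat a Hax) as [E | <-]; auto.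
  exfalso; apply (T_neq_bot a Ta E).
Qed.

Lemma atom_iff_T (x : K) : is_atom x <-> T K x.
Proof. split; [apply atom_T | apply T_atom]. Qed.

Lemma TODA_is_atomic : is_atomic K.
Proof.
  intros x Hx; destruct (exists_T_le x Hx) as [a [Ta Hax]].
  exists a; split; [apply T_atom |]; auto.
Qed.

Lemma hK_morphism : @ida_morphism K (PT T K) (hK T K).
Proof.
  split; [| split; [| split; [| split]]]; simpl; intros; rewrite ?hK_ssup; auto.
  - apply pred_ext; intro w; unfold hK; split.
    + set (U := fun z => T K z /\ exists x, S x /\ le z x); intro Hw.
      assert (HU : le (sup S) (sup U)).
      { apply (sup_least HI); intros x Hx; rewrite <- (hK_ssup x).
        apply (sup_least HI); intros z [a [Ha ->]]; apply (sup_ub HI).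
        split; [exact (proj2_sig a) | exists x; auto]. }
      destruct (mem_of_T_le_sup (proj1_sig w) U (proj2_sig w) (fun y Hy => proj1 Hy)
                  (le_trans HI _ _ _ Hw HU)) as [_ [x [Hx Hwx]]].
      exists (hK T K x); split; [exists x |]; auto.
    + intros [A [[x [Hx ->]] Hwx]]; apply (le_trans HI) with x; [exact Hwx |].
      apply (sup_ub HI); auto.
  - destruct (HT1 K HI) as (_ & Tone & _).
    apply pred_ext; intro c; unfold hK; split; [| intros ->; apply (le_refl HI)].
    intro Hc; destruct (proj2 (T_atom _ Tone) _ Hc) as [E | E]; auto.
    exfalso; apply (T_neq_bot _ (proj2_sig c) E).
Qed.

Lemma hK_iso : @ida_iso K (PT T K) (hK T K).
Proof.
  split; [exact hK_morphism | split].
  - intros x y E; rewrite <- (hK_ssup x), E, hK_ssup; auto.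
  - intro A; exists (ssup T K A); apply ssup_hK.
Qed.

Lemma PT_is_TODA (HT4 : T_T4 T) : is_TODA T (PT T K).
Proof.
  exact (@is_TODA_transport K (PT T K) (hK T K) (ssup T K)
           hK_ssup ssup_hK hK_morphism hK_le T HT4 HI HK).
Qed.

End Representation.

Theorem lemma4p5 (T : Tfunctor)
  (HT1 : T_T1 T) (HT2 : T_T2 T) (HT3 : T_T3 T) (HT4 : T_T4 T)
  (K : ida) (HK : is_TODA T K) :
  (is_lattice K /\ is_atomic K /\ (forall x : K, is_atom x <-> T K x)) /\
  (is_TODA T (PT T K) /\ @ida_iso K (PT T K) (hK T K)).
Proof.
  split; [split; [| split] | split].
  - exact (ida_is_lattice (proj1 HK)).
  - exact (TODA_is_atomic T HT1 K HK).
  - exact (atom_iff_T T HT1 K HK).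
  - exact (PT_is_TODA T HT1 K HK HT4).
  - exact (hK_iso T HT1 K HK).
Qed.
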